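(* Let $(G_n)_{n\in\mathbb N}$ be a sequence of finite graphs that converges elementarily to some ultra-homogeneous graph $\hat G$. Then the following are equivalent: (i) $(G_n)$ is $\mathrm{FO}$-convergent; (ii) $(G_n)$ is $\mathrm{QF}$-convergent; (iii) $(G_n)$ is L-convergent.
   Context: For a first-order graph formula $\phi$ with free variables among $x_1,\dots,x_p$ and a finite graph $G$, $\langle\phi,G\rangle=|\{(v_1,\dots,v_p)\in V(G)^p:G\models\phi(v_1,\dots,v_p)\}|/|G|^p$. $(G_n)$ is $X$-convergent (for a set $X$ of formulas) if $\langle\phi,G_n\rangle$ converges for all $\phi\in X$; FO is the set of all first-order formulas and QF the set of quantifier-free formulas (using adjacency and equality). $(G_n)$ is L-convergent if $\hom(F,G_n)/|G_n|^{|F|}$ converges for every finite graph $F$. $(G_n)$ converges elementarily to a (finite or countable) graph $\hat G$ if for every first-order sentence $\theta$, $\hat G\models\theta$ iff $G_n\models\theta$ for all sufficiently large $n$. A graph is ultra-homogeneous if every isomorphism between finite induced subgraphs extends to an automorphism of the graph. *)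

From HB Require Import structures.
From mathcomp Require Import all_boot.
From Stdlib Require Import Reals ClassicalEpsilon.

Set Implicit Arguments.
Unset Strict Implicit.
Unset Printing Implicit Defensive.

Record fin_graph := FGraph {
  fV :> finType;
  fadj : rel fV;
  fadj_sym : symmetric fadj;
  fadj_irr : irreflexive fadj }.

Record cnt_graph := CGraph {
  cV :> countType;
  cadj : cV -> cV -> Prop;
  cadj_sym : forall x y, cadj x y -> cadj y x;
  cadj_irr : forall x, ~ cadj x x }.

Inductive form :=
  | FAdj of nat & nat
  | FEq of nat & nat
  | FNot of form
  | FAnd of form & form
  | FOr of form & form
  | FEx of nat & form
  | FAll of nat & form.

Definition upd (T : Type) (e : nat -> T) (i : nat) (x : T) : nat -> T :=
  fun k => if k == i then x else e k.

Fixpoint sat (T : Type) (adj : T -> T -> Prop) (e : nat -> T) (f : form) : Prop :=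
  match f with
  | FAdj i j => adj (e i) (e j)
  | FEq i j => e i = e j
  | FNot g => ~ sat adj e g
  | FAnd g h => sat adj e g /\ sat adj e h
  | FOr g h => sat adj e g \/ sat adj e h
  | FEx i g => exists x : T, sat adj (upd e i x) g
  | FAll i g => forall x : T, sat adj (upd e i x) g
  end.

Fixpoint free (f : form) (k : nat) : bool :=
  match f with
  | FAdj i j | FEq i j => (k == i) || (k == j)
  | FNot g => free g k
  | FAnd g h | FOr g h => free g k || free h k
  | FEx i g | FAll i g => (k != i) && free g k
  end.

Definition fv_below (p : nat) (f : form) : Prop := forall k, free f k -> (k < p)%N.

Definition sentence (f : form) : Prop := fv_below 0 f.

Fixpoint qf (f : form) : bool :=
  match f with
  | FAdj _ _ | FEq _ _ => true
  | FNot g => qf g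
  | FAnd g h | FOr g h => qf g && qf h
  | FEx _ _ | FAll _ _ => false
  end.

Definition fmodels (G : fin_graph) (th : form) : Prop :=
  forall e : nat -> G, sat (fun x y => fadj x y) e th.
Definition cmodels (G : cnt_graph) (th : form) : Prop :=
  forall e : nat -> G, sat (@cadj G) e th.

Definition pb (P : Prop) : bool := if excluded_middle_informative P then true else false.

(* <phi, G> for phi with free variables among x_0..x_{p-1}:
   |{ (v_0..v_{p-1}) in V^p : G |= phi(v) }| / |G|^p *)
Definition density (p : nat) (f : form) (G : fin_graph) : R :=
  (INR #|[set t : {ffun 'I_p -> G} |
            pb (exists e : nat -> G, (forall i : 'I_p, e i = t i) /\
                                     sat (fun x y => fadj x y) e f)]|
   / INR (expn #|G| p))%R.

Definition convergent (u : nat -> R) : Prop := exists l : R, Un_cv u l.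

Definition FO_convergent (G : nat -> fin_graph) : Prop :=
  forall (p : nat) (f : form), fv_below p f -> convergent (fun n => density p f (G n)).
Definition QF_convergent (G : nat -> fin_graph) : Prop :=
  forall (p : nat) (f : form), qf f -> fv_below p f ->
    convergent (fun n => density p f (G n)).

Definition hom (F G : fin_graph) : nat :=
  #|[set h : {ffun F -> G} | [forall x, forall y, fadj x y ==> fadj (h x) (h y)]]|.

Definition L_convergent (G : nat -> fin_graph) : Prop :=
  forall F : fin_graph, convergent (fun n => (INR (hom F (G n)) / INR (expn #|G n| #|F|))%R).

Definition elem_converges (G : nat -> fin_graph) (H : cnt_graph) : Prop :=
  forall th : form, sentence th ->
    (cmodels H th <-> exists N, forall n, (N <= n)%N -> fmodels (G n) th).

(* every isomorphism between finite induced subgraphs extends to an automorphism;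
   a finite induced subgraph is given by a finite vertex list A, and an
   isomorphism onto the induced subgraph on f(A) by a map f injective on A
   preserving adjacency and non-adjacency *)
Definition ultra_homogeneous (H : cnt_graph) : Prop :=
  forall (A : seq H) (f : H -> H),
    {in A &, injective f} ->
    (forall x y, x \in A -> y \in A -> (cadj x y <-> cadj (f x) (f y))) ->
    exists g : H -> H,
      bijective g /\ (forall x y, cadj x y <-> cadj (g x) (g y)) /\
      (forall x, x \in A -> g x = f x).

From Stdlib Require Import Reals Lra Lia ClassicalEpsilon FunctionalExtensionality Classical.
From mathcomp Require Import all_boot zify.
Set Implicit Arguments. Unset Strict Implicit. Unset Printing Implicit Defensive.

(* In an ultra-homogeneous graph the truth of a formula at a tuple depends only on the
   quantifier-free diagram of the tuple, so a formula phi is equivalent in the limit to the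
   disjunction psi of the diagrams it realises there.  The sentence "forall x, phi <-> psi"
   holds in the limit, hence in G_n for large n, and then phi and psi have the same density.
   Homomorphism densities t(F, -) are densities of the conjunction of the edges of F.
   Conversely, by inclusion-exclusion the density of a quantifier-free formula is an integer
   combination of densities of conjunctions of atoms; the solutions of such a conjunction
   are the homomorphisms from a quotient graph K, so its density is t(K, G_n) |G_n|^-(p-|K|).
   Finally 1/|G_n| converges: the sentences "there are at least j vertices" force |G_n|
   either to stabilise or to tend to infinity. *)

Lemma eq_sat T (adj : T -> T -> Prop) (e e' : nat -> T) f :
  (forall k, free f k -> e k = e' k) -> (sat adj e f <-> sat adj e' f).
Proof.
elim: f e e' => [i j|i j|g IH|g IHg h IHh|g IHg h IHh|i g IH|i g IH] e e' ee' /=.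
- by rewrite !ee' //= eqxx ?orbT.
- by rewrite !ee' //= eqxx ?orbT.
- by rewrite (IH e e').
- by rewrite (IHg e e') ?(IHh e e') // => k hk; apply: ee'; rewrite /= hk ?orbT.
- by rewrite (IHg e e') ?(IHh e e') // => k hk; apply: ee'; rewrite /= hk ?orbT.
- have E x : sat adj (upd e i x) g <-> sat adj (upd e' i x) g.
    by apply: IH => k hk; rewrite /upd; case: eqP => // /eqP ki; apply: ee'; rewrite /= ki.
  by split=> -[x hx]; exists x; apply/E.
- have E x : sat adj (upd e i x) g <-> sat adj (upd e' i x) g.
    by apply: IH => k hk; rewrite /upd; case: eqP => // /eqP ki; apply: ee'; rewrite /= ki.
  by split=> hx x; apply/E.
Qed.

Lemma sat_sentence T (adj : T -> T -> Prop) th e e' :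
  sentence th -> (sat adj e th <-> sat adj e' th).
Proof. by move=> sth; apply: eq_sat => k /sth. Qed.

Lemma sat_iso T (adj : T -> T -> Prop) (g : T -> T) e f :
  bijective g -> (forall x y, adj x y <-> adj (g x) (g y)) ->
  (sat adj e f <-> sat adj (g \o e) f).
Proof.
move=> [g' gK g'K] g_adj.
have g_upd e0 i x : g \o upd e0 i x = upd (g \o e0) i (g x).
  by apply: functional_extensionality => k; rewrite /upd /=; case: (k == i).
elim: f e => [i j|i j|f IH|f IHf h IHh|f IHf h IHh|i f IH|i f IH] e /=.
- exact: g_adj.
- by split=> [->|/(congr1 g')]; rewrite ?gK.
- by rewrite IH.
- by rewrite IHf IHh.
- by rewrite IHf IHh.
- split=> -[x hx]; first by exists (g x); rewrite -g_upd -IH.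
  by exists (g' x); rewrite IH g_upd g'K.
- split=> hx x; first by rewrite -(g'K x) -g_upd -IH.
  by rewrite IH g_upd.
Qed.

Lemma cmodels_or_not (H : cnt_graph) th :
  sentence th -> cmodels H th \/ cmodels H (FNot th).
Proof.
move=> sth; case: (classic (exists e, ~ sat (@cadj H) e th)) => [[e he]|he].
  by right=> e' /=; rewrite (sat_sentence _ e' e sth).
by left=> e; apply: NNPP => ne; apply: he; exists e.
Qed.

Definition closeAll (l : seq nat) f := foldr FAll f l.
Definition closeEx (l : seq nat) f := FNot (closeAll l (FNot f)).

Lemma free_closeAll l f k : free (closeAll l f) k = (k \notin l) && free f k.
Proof. by elim: l => [|i l IH] //=; rewrite IH in_cons negb_or andbA. Qed.

Lemma free_closeEx l f k : free (closeEx l f) k = (k \notin l) && free f k.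
Proof. exact: free_closeAll. Qed.

Lemma sat_closeAll T (adj : T -> T -> Prop) l f e :
  sat adj e (closeAll l f) <->
  forall e', (forall k, k \notin l -> e' k = e k) -> sat adj e' f.
Proof.
elim: l e => [|i l IH] e /=.
  split=> [hf e' ee'|]; last by apply=> k.
  by have -> : e' = e by apply: functional_extensionality => k; apply: ee'.
split=> [hf e' ee'|hf x].
  move: (hf (e' i)); rewrite IH; apply=> k kl; rewrite /upd.
  by case: eqP => [->//|/eqP ki]; apply: ee'; rewrite in_cons negb_or ki.
rewrite IH => e' ee'; apply: hf => k; rewrite in_cons negb_or => /andP[ki kl].
by rewrite ee' // /upd (negbTE ki).
Qed.

Lemma sat_closeEx T (adj : T -> T -> Prop) l f e :
  sat adj e (closeEx l f) <->
  exists e', (forall k, k \notin l -> e' k = e k) /\ sat adj e' f.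
Proof.
rewrite /= sat_closeAll; split=> [not_all|[e' [ee' he']] all_not]; last exact: all_not e' ee' he'.
have [e' he'] := not_all_ex_not _ _ not_all.
have [ee' /NNPP hf] := imply_to_and _ _ he'.
by exists e'.
Qed.

Definition FIff f g := FAnd (FOr (FNot f) g) (FOr (FNot g) f).

Lemma sat_FIff T (adj : T -> T -> Prop) e f g :
  sat adj e (FIff f g) <-> (sat adj e f <-> sat adj e g).
Proof. by have := classic (sat adj e f); have := classic (sat adj e g); simpl; tauto. Qed.

Definition bigAnd (X : Type) (s : seq X) (F : X -> form) (t : form) :=
  foldr (fun x acc => FAnd (F x) acc) t s.
Definition bigOr (X : Type) (s : seq X) (F : X -> form) (b : form) :=
  FNot (bigAnd s (fun x => FNot (F x)) (FNot b)).

Lemma sat_bigAnd T (adj : T -> T -> Prop) e (X : eqType) (s : seq X) F t :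
  sat adj e (bigAnd s F t) <-> sat adj e t /\ forall x, x \in s -> sat adj e (F x).
Proof.
elim: s => [|x s IH] /=; first by split=> [|[]//]; split.
rewrite IH; split=> [[hx [ht hs]]|[ht hs]].
  by split=> // y; rewrite in_cons => /orP[/eqP->|/hs].
by split; [apply: hs; rewrite mem_head | split=> // y ys; apply: hs; rewrite in_cons ys orbT].
Qed.

Lemma sat_bigOr T (adj : T -> T -> Prop) e (X : eqType) (s : seq X) F b :
  sat adj e (bigOr s F b) <-> sat adj e b \/ exists2 x, x \in s & sat adj e (F x).
Proof.
rewrite /= sat_bigAnd /=; split=> [none|[hb [nb _]|[x xs hx] [_ nx]]]; last 2 first.
- exact: nb.
- exact: nx x xs hx.
case: (classic (sat adj e b)) => [|nb]; first by left.
right; apply: NNPP => nex; apply: none; split=> // x xs hx; apply: nex; by exists x.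
Qed.

Lemma free_bigAnd (X : eqType) (s : seq X) F t k :
  free (bigAnd s F t) k -> free t k \/ exists2 x, x \in s & free (F x) k.
Proof.
elim: s => [|x s IH] /=; first by left.
case/orP=> [hx|/IH [ht|[y ys hy]]]; [right; exists x | left | right; exists y] => //.
  exact: mem_head.
by rewrite in_cons ys orbT.
Qed.

Lemma free_bigOr (X : eqType) (s : seq X) F b k :
  free (bigOr s F b) k -> free b k \/ exists2 x, x \in s & free (F x) k.
Proof. exact: free_bigAnd. Qed.

Lemma qf_bigAnd (X : Type) (s : seq X) F t :
  qf t -> (forall x, qf (F x)) -> qf (bigAnd s F t).
Proof. by move=> qt qF; elim: s => //= x s ->; rewrite qF. Qed.

Lemma qf_bigOr (X : Type) (s : seq X) F b :
  qf b -> (forall x, qf (F x)) -> qf (bigOr s F b).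
Proof. by move=> qb qF; apply: qf_bigAnd. Qed.

Lemma pbP (P : Prop) : reflect P (pb P).
Proof. by rewrite /pb; case: excluded_middle_informative => h; constructor. Qed.

Lemma pb_iff (P Q : Prop) : (P <-> Q) -> pb P = pb Q.
Proof. by move=> PQ; apply/idP/idP => /pbP h; apply/pbP; tauto. Qed.

Lemma pb_bool (b : bool) : pb b = b.
Proof. exact/pbP/idP. Qed.

Lemma pb_eq (P : Prop) (b : bool) : pb P = b <-> (P <-> b).
Proof. by split=> [<-|/pb_iff ->]; [split=> /pbP | exact: pb_bool]. Qed.

Lemma pb_inj (P Q : Prop) : pb P = pb Q -> (P <-> Q).
Proof. by move=> /pb_eq PQ; split=> [/PQ /pbP //|/pbP /PQ]. Qed.

Lemma pb_and (P Q : Prop) : pb (P /\ Q) = pb P && pb Q.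
Proof. by apply/pbP/andP => -[/pbP ? /pbP ?]. Qed.

Lemma pb_not (P : Prop) : pb (~ P) = ~~ pb P.
Proof. by apply/pbP/negP => np /pbP. Qed.

Definition eventually (P : nat -> Prop) := exists N, forall n, (N <= n)%N -> P n.

Lemma eventually_and (P Q : nat -> Prop) :
  eventually P -> eventually Q -> eventually (fun n => P n /\ Q n).
Proof.
move=> [M hP] [N hQ]; exists (maxn M N) => n; rewrite geq_max => /andP[hM hN].
by split; [apply: hP | apply: hQ].
Qed.

Lemma eventually_mono (P Q : nat -> Prop) :
  (forall n, P n -> Q n) -> eventually P -> eventually Q.
Proof. by move=> PQ [N hP]; exists N => n /hP /PQ. Qed.

Section RealSequences.
Local Open Scope R_scope.

Lemma convergent_eventually_eq (u v : nat -> R) :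
  eventually (fun n => u n = v n) -> convergent v -> convergent u.
Proof.
move=> [N uv] [l vl]; exists l => eps eps_gt0; have [M hM] := vl eps eps_gt0.
exists (maxn N M) => n /leP; rewrite geq_max => /andP[hN hM'].
by rewrite uv //; apply: hM; apply/leP.
Qed.

Lemma convergent_ext (u v : nat -> R) :
  (forall n, u n = v n) -> convergent v -> convergent u.
Proof. by move=> uv; apply: convergent_eventually_eq; exists 0%N. Qed.

Lemma convergent_const (c : R) : convergent (fun _ => c).
Proof.
by exists c => eps eps_gt0; exists 0%N => n _; rewrite /R_dist Rminus_diag Rabs_R0.
Qed.

Lemma convergent_plus u v :
  convergent u -> convergent v -> convergent (fun n => u n + v n).
Proof. by move=> [a ua] [b vb]; exists (a + b); apply: CV_plus. Qed.

Lemma convergent_minus u v :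
  convergent u -> convergent v -> convergent (fun n => u n - v n).
Proof. by move=> [a ua] [b vb]; exists (a - b); apply: CV_minus. Qed.

Lemma convergent_mult u v :
  convergent u -> convergent v -> convergent (fun n => u n * v n).
Proof. by move=> [a ua] [b vb]; exists (a * b); apply: CV_mult. Qed.

Lemma convergent_pow u k : convergent u -> convergent (fun n => u n ^ k).
Proof. by move=> cu; elim: k => [|k IH]; [exact: convergent_const | exact: convergent_mult]. Qed.

End RealSequences.

(** * Ultra-homogeneous limits *)

Definition diagram T (adj : T -> T -> Prop) p (e : nat -> T) :
    {ffun 'I_p * 'I_p -> bool * bool} :=
  [ffun ij : 'I_p * 'I_p => (pb (adj (e ij.1) (e ij.2)), pb (e ij.1 = e ij.2))].

Definition lit (b : bool) f := if b then f else FNot f.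

(* [FEq 0 0] plays the role of "true"; it mentions [x_0], whence [0 < p] below. *)
Definition diagram_form p (d : {ffun 'I_p * 'I_p -> bool * bool}) : form :=
  bigAnd (enum {: 'I_p * 'I_p})
    (fun ij : 'I_p * 'I_p => FAnd (lit (d ij).1 (FAdj ij.1 ij.2)) (lit (d ij).2 (FEq ij.1 ij.2)))
    (FEq 0 0).

Lemma sat_lit T (adj : T -> T -> Prop) e b f :
  sat adj e (lit b f) <-> (sat adj e f <-> b).
Proof. by case: b => /=; intuition. Qed.

Lemma sat_diagram_form T (adj : T -> T -> Prop) p e d :
  sat adj e (@diagram_form p d) <-> diagram adj p e = d.
Proof.
rewrite sat_bigAnd /=; split=> [[_ hd]|<-].
  apply/ffunP => ij; rewrite ffunE; have /= := hd ij; rewrite mem_enum => /(_ isT).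
  by rewrite !sat_lit /=; case: (d ij) => b1 b2 /= [h1 h2]; congr pair; apply/pb_eq.
by split=> // ij _ /=; rewrite !ffunE /= !sat_lit /=; split; apply/pb_eq.
Qed.

Lemma free_diagram_form p d : (0 < p)%N -> fv_below p (@diagram_form p d).
Proof.
have free_lit b f k : free (lit b f) k = free f k by case: b.
move=> p_gt0 k /free_bigAnd [/=|[ij _]]; first by rewrite orbb => /eqP->.
by rewrite /= !free_lit /= => /orP[] /orP[] /eqP->.
Qed.

Lemma qf_diagram_form p d : qf (@diagram_form p d).
Proof. by apply: qf_bigAnd => // ij; case: (d ij) => [[] []]. Qed.

Lemma uh_sat_diagram (H : cnt_graph) p f (e e' : nat -> H) :
  ultra_homogeneous H -> fv_below p f ->
  diagram (@cadj H) p e = diagram (@cadj H) p e' ->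
  (sat (@cadj H) e f <-> sat (@cadj H) e' f).
Proof.
move=> uh fvf dee'.
have same_diagram i j : (i < p)%N -> (j < p)%N ->
    (cadj (e i) (e j) <-> cadj (e' i) (e' j)) /\ (e i = e j <-> e' i = e' j).
  move=> ip jp; have := congr1 (fun d : {ffun _ -> _} => d (Ordinal ip, Ordinal jp)) dee'.
  by rewrite !ffunE => -[adj_ij eq_ij]; split; apply: pb_inj.
pose A := map e (iota 0 p).
pose iso x := e' (index x A).
have inA x : x \in A -> exists2 i, (i < p)%N & x = e i.
  by case/mapP => i; rewrite mem_iota => /andP[_ ip] ->; exists i.
have isoE i : (i < p)%N -> iso (e i) = e' i.
  move=> ip; have eA : e i \in A by rewrite map_f // mem_iota.
  have jp : (index (e i) A < p)%N by rewrite -index_mem size_map size_iota in eA.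
  have := nth_index (e i) eA; rewrite (nth_map 0) ?size_iota // nth_iota // add0n.
  by move/(same_diagram _ _ jp ip).2.
have iso_inj : {in A &, injective iso}.
  move=> x y /inA [i ip ->] /inA [j jp ->]; rewrite !isoE //.
  by move/(same_diagram _ _ ip jp).2.
have iso_adj x y : x \in A -> y \in A -> (cadj x y <-> cadj (iso x) (iso y)).
  move=> /inA [i ip ->] /inA [j jp ->]; rewrite !isoE //.
  exact: (same_diagram _ _ ip jp).1.
have [g [g_bij [g_adj g_iso]]] := uh A iso iso_inj iso_adj.
rewrite (sat_iso e f g_bij g_adj); apply: eq_sat => k /fvf kp /=.
by rewrite g_iso ?isoE // map_f // mem_iota.
Qed.

Definition qf_equiv_form (H : cnt_graph) p f : form :=
  bigOr [seq d <- enum {ffun 'I_p * 'I_p -> bool * bool} |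
          pb (exists e, diagram (@cadj H) p e = d /\ sat (@cadj H) e f)]
        (@diagram_form p) (FNot (FEq 0 0)).

Lemma sat_qf_equiv_form (H : cnt_graph) p f e :
  ultra_homogeneous H -> fv_below p f ->
  (sat (@cadj H) e f <-> sat (@cadj H) e (qf_equiv_form H p f)).
Proof.
move=> uh fvf; rewrite sat_bigOr /=; split=> [hf|[//|[d]]].
  right; exists (diagram (@cadj H) p e); last exact/sat_diagram_form.
  by rewrite mem_filter mem_enum andbT; apply/pbP; exists e.
rewrite mem_filter => /andP[/pbP [e0 [<- he0]] _] /sat_diagram_form de.
exact: (proj2 (uh_sat_diagram uh fvf de) he0).
Qed.

Lemma free_qf_equiv_form H p f : (0 < p)%N -> fv_below p (qf_equiv_form H p f).
Proof.
move=> p_gt0 k /free_bigOr [/= /orP[] /eqP->//|[d _]].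
exact: free_diagram_form.
Qed.

Lemma qf_qf_equiv_form H p f : qf (qf_equiv_form H p f).
Proof. by apply: qf_bigOr => //; apply: qf_diagram_form. Qed.

Lemma eq_density (G : fin_graph) p f g :
  (forall e : nat -> G, sat (fun x y => fadj x y) e f <-> sat (fun x y => fadj x y) e g) ->
  density p f G = density p g G.
Proof.
move=> fg; rewrite /density; congr Rdiv; congr INR; apply: eq_card => t; rewrite !inE.
by apply: pb_iff; split=> -[e [et he]]; exists e; split=> //; apply/fg.
Qed.

Lemma free_FIff f g k : free (FIff f g) k = free f k || free g k.
Proof. by rewrite /=; case: (free f k); case: (free g k). Qed.

Lemma eventually_density_qf_equiv (G : nat -> fin_graph) (H : cnt_graph) p f :
  (0 < p)%N -> elem_converges G H -> ultra_homogeneous H -> fv_below p f ->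
  eventually (fun n => density p f (G n) = density p (qf_equiv_form H p f) (G n)).
Proof.
move=> p_gt0 ec uh fvf.
pose th := closeAll (iota 0 p) (FIff f (qf_equiv_form H p f)).
have sth : sentence th.
  move=> k; rewrite free_closeAll mem_iota add0n free_FIff => /andP[/negP kp fk].
  by case: kp; case/orP: fk => [/fvf|/(free_qf_equiv_form p_gt0)] ->.
have : eventually (fun n => fmodels (G n) th).
  apply: (proj1 (ec th sth)) => e; apply/sat_closeAll => e' _.
  exact/sat_FIff/sat_qf_equiv_form.
apply: eventually_mono => n Gth; apply: eq_density => e.
by have /sat_closeAll /(_ e (fun _ _ => erefl)) /sat_FIff := Gth e.
Qed.

Lemma density_sentence (G : fin_graph) q f : sentence f ->
  density q f G = if pb (exists e : nat -> G, sat (fun x y => fadj x y) e f) then R1 else R0.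
Proof.
move=> sf; rewrite /density; case: pbP => [[e0 he0]|none]; last first.
  rewrite (_ : [set t | _] = set0) ?cards0 ?Rdiv_0_l //.
  by apply/setP => t; rewrite !inE; apply/pbP => -[e [_ he]]; apply: none; exists e.
rewrite (_ : [set t | _] = setT) ?cardsT ?card_ffun ?card_ord.
  apply: Rdiv_diag; apply/not_0_INR/eqP; rewrite expn_eq0 negb_and -lt0n.
  by apply/orP; left; apply/card_gt0P; exists (e0 0).
apply/setP => t; rewrite !inE; apply/pbP.
exists (fun k => odflt (e0 k) (omap t (insub k))); split=> [i|].
  by rewrite valK.
exact: (proj1 (sat_sentence _ _ _ sf) he0).
Qed.

Lemma convergent_density_uh (G : nat -> fin_graph) (H : cnt_graph) p f :
  (0 < p)%N -> elem_converges G H -> ultra_homogeneous H -> QF_convergent G ->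
  fv_below p f -> convergent (fun n => density p f (G n)).
Proof.
move=> p_gt0 ec uh qc fvf.
apply: convergent_eventually_eq (eventually_density_qf_equiv p_gt0 ec uh fvf) _.
exact: qc (qf_qf_equiv_form H p f) (free_qf_equiv_form p_gt0).
Qed.

Lemma QF_FO_convergent (G : nat -> fin_graph) (H : cnt_graph) :
  elem_converges G H -> ultra_homogeneous H -> QF_convergent G -> FO_convergent G.
Proof.
move=> ec uh qc [|p] f fvf; last exact: convergent_density_uh _ ec uh qc fvf.
have density01 n : density 0 f (G n) = density 1 f (G n) by rewrite !density_sentence.
apply: convergent_ext density01 _.
by apply: convergent_density_uh ec uh qc _ => // k /fvf.
Qed.

(** * Homomorphism densities *)

Definition edge_form (F : fin_graph) : form :=
  bigAnd [seq ij <- enum {: 'I_#|F| * 'I_#|F|} | fadj (enum_val ij.1) (enum_val ij.2)]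
         (fun ij => FAdj ij.1 ij.2) (FEq 0 0).

Lemma qf_edge_form F : qf (edge_form F).
Proof. exact: qf_bigAnd. Qed.

Lemma free_edge_form (F : fin_graph) : (0 < #|F|)%N -> fv_below #|F| (edge_form F).
Proof. by move=> F_gt0 k /free_bigAnd [/= /orP[] /eqP->|[ij _ /= /orP[] /eqP->]]. Qed.

Definition hom_density (F G : fin_graph) : R := Rdiv (INR (hom F G)) (INR (#|G| ^ #|F|)).

Lemma density_edge_form (F G : fin_graph) : (0 < #|F|)%N ->
  density #|F| (edge_form F) G = hom_density F G.
Proof.
move=> F_gt0; rewrite /density /hom_density; congr Rdiv; congr INR.
pose tuple_of (h : {ffun F -> G}) : {ffun 'I_#|F| -> G} := [ffun i => h (enum_val i)].
have tuple_inj : injective tuple_of.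
  move=> h1 h2 /ffunP h12; apply/ffunP => x.
  by have := h12 (enum_rank x); rewrite !ffunE enum_rankK.
rewrite /hom -(card_imset _ tuple_inj); apply: eq_card => t; rewrite !inE.
apply/pbP/imsetP => [[e [et /sat_bigAnd [_ edges]]]|[h]].
  exists [ffun x => t (enum_rank x)]; last by apply/ffunP => i; rewrite !ffunE enum_valK.
  rewrite inE; apply/forallP => x; apply/forallP => y; apply/implyP => xy; rewrite !ffunE.
  have := edges (enum_rank x, enum_rank y); rewrite mem_filter /= !enum_rankK xy mem_enum.
  by rewrite /= !et => ->.
rewrite inE => /forallP h_hom ->.
exists (fun k => odflt (h (enum_val (Ordinal F_gt0))) (omap (tuple_of h) (insub k))).
split=> [i|]; first by rewrite valK.
apply/sat_bigAnd; split=> // ij; rewrite mem_filter /= !valK /= !ffunE => /andP[ij_adj _].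
by have /forallP /(_ (enum_val ij.2)) /implyP := h_hom (enum_val ij.1); apply.
Qed.

Lemma hom_card0 (F G : fin_graph) : #|F| = 0%N -> hom F G = 1%N.
Proof.
move=> F0; rewrite /hom -[RHS](expn0 #|G|) -F0 -card_ffun -cardsT; apply: eq_card => h.
by rewrite !inE; apply/forallP => x; have := card0_eq F0 x; rewrite inE.
Qed.

Lemma QF_L_convergent (G : nat -> fin_graph) : QF_convergent G -> L_convergent G.
Proof.
move=> qc F; case: (posnP #|F|) => [F0|F_gt0].
  apply: (convergent_ext _ (convergent_const R1)) => n.
  by rewrite /hom_density hom_card0 // F0 expn0 Rdiv_1_r.
apply: (convergent_ext (fun n => esym (density_edge_form (G n) F_gt0))).
exact: qc (qf_edge_form F) (free_edge_form F_gt0).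
Qed.

(** * The number of vertices of [G n] *)

Definition K1 : fin_graph :=
  @FGraph unit (fun _ _ => false) (fun _ _ => erefl) (fun _ => erefl).

Lemma hom_K1 (G : fin_graph) : hom K1 G = #|G|.
Proof.
rewrite /hom -[RHS](expn1 #|G|) -card_unit -card_ffun -cardsT; apply: eq_card => h.
by rewrite !inE; apply/forallP => x; apply/forallP.
Qed.

Lemma hom_density_K1 (G : fin_graph) : hom_density K1 G = if (0 < #|G|)%N then R1 else R0.
Proof.
rewrite /hom_density hom_K1 /= card_unit expn1; case: posnP => [->|G_gt0].
  exact: Rdiv_0_l.
by apply: Rdiv_diag; apply/not_0_INR/eqP; rewrite -lt0n.
Qed.

Definition at_least j : form :=
  closeEx (iota 0 j)
    (bigAnd [seq ij <- enum {: 'I_j * 'I_j} | ij.1 != ij.2]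
            (fun ij => FNot (FEq ij.1 ij.2)) (FAll 0 (FEq 0 0))).

Lemma sentence_at_least j : sentence (at_least j).
Proof.
move=> k; rewrite free_closeEx mem_iota add0n => /andP[/negP kj].
case/free_bigAnd => [/=|[ij _ /= /orP[] /eqP k_ij]]; first by rewrite orbb => /andP[/negbTE->].
all: by case: kj; rewrite k_ij ltn_ord.
Qed.

Lemma sat_at_least (G : fin_graph) (e : nat -> G) j :
  sat (fun x y => fadj x y) e (at_least j) <-> (j <= #|G|)%N.
Proof.
rewrite sat_closeEx; split=> [[e' [_ /sat_bigAnd [_ distinct]]]|jG].
  suff e'_inj : injective (fun i : 'I_j => e' i) by have := leq_card _ e'_inj; rewrite card_ord.
  move=> i i' ii'; apply/eqP; apply: contraT => /= neq_ii'.
  by case: (distinct (i, i')); rewrite // mem_filter neq_ii' mem_enum.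
exists (fun k => if (k < j)%N then nth (e 0) (enum G) k else e k); split.
  by move=> k; rewrite mem_iota add0n /= => /negbTE ->.
apply/sat_bigAnd; split=> // ij; rewrite mem_filter /= !ltn_ord => /andP[neq_ij _].
have lt_G (i : 'I_j) : (i < size (enum G))%N by rewrite -cardE (leq_trans (ltn_ord i)).
by move/eqP; rewrite nth_uniq ?enum_uniq //; apply/negP.
Qed.

Section OrderOfLimit.
Local Open Scope R_scope.

(* An empty graph satisfies every sentence, so elementary convergence alone cannot rule out
   infinitely many empty [G n]; the density of [K1], which is 0 or 1, does. *)
Lemma eventually_empty_or_nonempty (G : nat -> fin_graph) : L_convergent G ->
  eventually (fun n => #|G n| = 0%N) \/ eventually (fun n => (0 < #|G n|)%N).
Proof.
move=> /(_ K1) [l hl].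
have [N hN] := (hl : Un_cv (fun n => hom_density K1 (G n)) l) (/2) ltac:(lra).
have same n : (N <= n)%N -> (0 < #|G n|)%N = (0 < #|G N|)%N.
  move=> /leP Nn; have := hN n Nn; have := hN N (le_n N).
  rewrite /R_dist /= !hom_density_K1.
  by case: (0 < #|G n|)%N; case: (0 < #|G N|)%N => // h1 h2; exfalso; split_Rabs; lra.
case: (posnP #|G N|) => [GN0|GN_gt0]; [left|right]; exists N => n /same.
  by rewrite GN0 /= lt0n => /negbFE /eqP.
by rewrite GN_gt0.
Qed.

Lemma eventually_order_ge_or_lt (G : nat -> fin_graph) (H : cnt_graph) j :
  elem_converges G H -> eventually (fun n => (0 < #|G n|)%N) ->
  eventually (fun n => (j <= #|G n|)%N) \/ eventually (fun n => (#|G n| < j)%N).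
Proof.
move=> ec nonempty; have sj := @sentence_at_least j.
case: (cmodels_or_not H sj) => [Hj|Hnot_j]; [left|right].
  have := eventually_and (proj1 (ec _ sj) Hj) nonempty.
  apply: eventually_mono => n [Gn /card_gt0P [x _]].
  exact/(sat_at_least (fun _ => x))/Gn.
have := eventually_and (proj1 (ec (FNot (at_least j)) sj) Hnot_j) nonempty.
apply: eventually_mono => n [Gn /card_gt0P [x _]].
by rewrite ltnNge; apply/negP => /(sat_at_least (fun _ => x)); apply: Gn.
Qed.

Lemma unbounded_or_stable (u : nat -> nat) :
  (forall j, eventually (fun n => (j <= u n)%N) \/ eventually (fun n => (u n < j)%N)) ->
  (forall j, eventually (fun n => (j <= u n)%N)) \/ exists c, eventually (fun n => u n = c).
Proof.
move=> ge_or_lt; case: (classic (forall j, eventually (fun n => (j <= u n)%N))); first by left.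
move=> /not_all_ex_not [j not_ge]; right; elim: j not_ge => [|j IH] not_ge.
  by case: not_ge; exists 0%N.
case: (ge_or_lt j.+1) => [//|lt].
case: (classic (eventually (fun n => (j <= u n)%N))) => [ge|/IH//].
exists j; apply: eventually_mono (eventually_and lt ge) => n [ltn gen].
by apply/eqP; rewrite eqn_leq -ltnS ltn gen.
Qed.

Lemma cv_inv_unbounded (u : nat -> nat) :
  (forall j, eventually (fun n => (j <= u n)%N)) -> Un_cv (fun n => / INR (u n)) 0.
Proof.
move=> unbounded eps eps_gt0; have [J [J_eps J_gt0]] := archimed_cor1 eps eps_gt0.
have [N hN] := unbounded J; exists N => n /leP /hN Ju.
have J_pos : 0 < INR J by apply: lt_0_INR.
have Ju_R : INR J <= INR (u n) by apply: le_INR; apply/leP.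
have := Rinv_le_contravar _ _ J_pos Ju_R; have := Rinv_0_lt_compat (INR (u n)) ltac:(lra).
by rewrite /R_dist Rminus_0_r; split_Rabs; lra.
Qed.

Lemma convergent_inv_order (G : nat -> fin_graph) (H : cnt_graph) :
  elem_converges G H -> L_convergent G -> convergent (fun n => / INR #|G n|).
Proof.
move=> ec lc; case: (eventually_empty_or_nonempty lc) => [empty|nonempty].
  apply: convergent_eventually_eq (convergent_const 0).
  by apply: eventually_mono empty => n ->; exact: Rinv_0.
have := unbounded_or_stable (fun j => eventually_order_ge_or_lt j ec nonempty).
case=> [unbounded|[c stable]]; first by exists 0; apply: cv_inv_unbounded.
apply: convergent_eventually_eq (convergent_const (/ INR c)).
by apply: eventually_mono stable => n ->.
Qed.

End OrderOfLimit.

(** * Conjunctions of atoms *)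

Definition holds_atom (G : fin_graph) (I : finType) (t : {ffun I -> G}) (a : bool * I * I) :=
  if a.1.1 then fadj (t a.1.2) (t a.2) else t a.1.2 == t a.2.

Section QuotientGraph.
Variables (I : finType) (S : seq (bool * I * I)).

Definition eq_atoms : rel I := fun i j => ((false, i, j) \in S) || ((false, j, i) \in S).
Definition adj_atoms : rel I := fun i j => ((true, i, j) \in S) || ((true, j, i) \in S).

Lemma eq_atoms_sym : symmetric eq_atoms.
Proof. by move=> i j; rewrite /eq_atoms orbC. Qed.

Lemma adj_atoms_sym : symmetric adj_atoms.
Proof. by move=> i j; rewrite /adj_atoms orbC. Qed.

Definition atom_class := root eq_atoms.

Lemma atom_class_idem i : atom_class (atom_class i) = atom_class i.
Proof. exact/root_root/sym_connect_sym/eq_atoms_sym. Qed.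

Definition quot_vertex := {i : I | atom_class i == i}.

Definition quot_adj (u v : quot_vertex) : bool :=
  (val u != val v) &&
  [exists i, exists j, adj_atoms i j && (atom_class i == val u) && (atom_class j == val v)].

Lemma quot_adj_sym : symmetric quot_adj.
Proof.
move=> u v; rewrite /quot_adj eq_sym; congr andb.
by apply/existsP/existsP => -[i /existsP [j /andP [/andP [ij iu] jv]]];
  exists j; apply/existsP; exists i; rewrite adj_atoms_sym ij iu jv.
Qed.

Lemma quot_adj_irr : irreflexive quot_adj.
Proof. by move=> u; rewrite /quot_adj eqxx. Qed.

Definition quotient_graph : fin_graph := FGraph quot_adj_sym quot_adj_irr.

Lemma card_quotient_graph : (#|quotient_graph| <= #|I|)%N.
Proof. by rewrite /= /quot_vertex card_sig max_card. Qed.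

Definition atoms_loop : bool :=
  [exists i, exists j, adj_atoms i j && (atom_class i == atom_class j)].

Lemma all_holds_atom (G : fin_graph) (t : {ffun I -> G}) :
  all (holds_atom t) S <->
  (forall i, t i = t (atom_class i)) /\ (forall i j, adj_atoms i j -> fadj (t i) (t j)).
Proof.
split=> [/allP holds|[t_class t_adj]].
  split=> [i|i j /orP[] /holds //=]; last by rewrite fadj_sym.
  have t_closed : closed eq_atoms [pred z | t z == t i].
    by move=> x y /orP[] /holds /eqP /= xy; rewrite !inE xy.
  by have := closed_connect t_closed (connect_root eq_atoms i); rewrite !inE eqxx => /esym /eqP.
apply/allP => -[[[] i] j] ij_in /=; first by apply: t_adj; rewrite /adj_atoms ij_in.
have /(rootP (sym_connect_sym eq_atoms_sym)) ij : connect eq_atoms i j.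
  by apply: connect1; rewrite /eq_atoms ij_in.
by rewrite /holds_atom /= t_class (t_class j) /atom_class ij.
Qed.

Lemma card_atoms_loop (G : fin_graph) :
  atoms_loop -> #|[set t : {ffun I -> G} | all (holds_atom t) S]| = 0%N.
Proof.
move=> /existsP [i /existsP [j /andP [ij /eqP ij_class]]].
apply/eqP; rewrite cards_eq0; apply/eqP/setP => t; rewrite !inE.
apply/negP => /all_holds_atom [t_class t_adj].
by have := t_adj _ _ ij; rewrite t_class (t_class j) ij_class fadj_irr.
Qed.

Lemma card_atoms_hom (G : fin_graph) :
  ~~ atoms_loop -> #|[set t : {ffun I -> G} | all (holds_atom t) S]| = hom quotient_graph G.
Proof.
move=> no_loop.
pose to_quot i : quot_vertex := exist _ (atom_class i) (introT eqP (atom_class_idem i)).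
have to_quot_val (u : quot_vertex) : to_quot (val u) = u.
  by apply: val_inj; apply/eqP; exact: (valP u).
pose lift (s : {ffun quot_vertex -> G}) : {ffun I -> G} := [ffun i => s (to_quot i)].
have lift_inj : injective lift.
  move=> s1 s2 /ffunP s12; apply/ffunP => u.
  by have := s12 (val u); rewrite !ffunE to_quot_val.
rewrite /hom -(card_imset _ lift_inj); apply: eq_card => t; rewrite !inE.
apply/idP/imsetP => [/all_holds_atom [t_class t_adj]|[s]].
  exists [ffun u : quot_vertex => t (val u)]; last first.
    by apply/ffunP => i; rewrite !ffunE /= -t_class.
  rewrite inE; apply/forallP => u; apply/forallP => v; apply/implyP => /andP[_].
  move=> /existsP [i /existsP [j /andP [/andP [ij /eqP iu] /eqP jv]]].
  by rewrite !ffunE -iu -jv -!t_class; apply: t_adj.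
rewrite inE => /forallP s_hom ->; apply/all_holds_atom; split=> [i|i j ij].
  by rewrite !ffunE; congr (s _); apply: val_inj; rewrite /= atom_class_idem.
rewrite !ffunE; have /forallP /(_ (to_quot j)) /implyP := s_hom (to_quot i); apply.
apply/andP; split.
  apply: contra no_loop => ij_class; apply/existsP; exists i; apply/existsP; exists j.
  by rewrite ij; exact: ij_class.
by apply/existsP; exists i; apply/existsP; exists j; rewrite ij !eqxx.
Qed.

End QuotientGraph.

Section TupleDensity.
Local Open Scope R_scope.
Variables (G : fin_graph) (I : finType).

Definition dens (P : {ffun I -> G} -> Prop) : R :=
  INR #|[set t | pb (P t)]| / INR (#|G| ^ #|I|).

Lemma eq_dens (P Q : {ffun I -> G} -> Prop) : (forall t, P t <-> Q t) -> dens P = dens Q.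
Proof.
move=> PQ; rewrite /dens; congr Rdiv; congr INR.
by apply: eq_card => t; rewrite !inE; apply: pb_iff.
Qed.

Lemma dens_split (P Q : {ffun I -> G} -> Prop) :
  dens P = dens (fun t => Q t /\ P t) + dens (fun t => ~ Q t /\ P t).
Proof.
rewrite /dens -Rdiv_plus_distr -plus_INR; congr Rdiv; congr INR.
rewrite -(cardID [set t | pb (Q t)] [set t | pb (P t)]); congr addn; apply: eq_card => t;
  by rewrite !inE pb_and ?pb_not // andbC.
Qed.

Lemma dens_not (P C : {ffun I -> G} -> Prop) :
  dens (fun t => ~ P t /\ C t) = dens C - dens (fun t => P t /\ C t).
Proof. by rewrite (dens_split C P); ring. Qed.

Lemma dens_or (P Q C : {ffun I -> G} -> Prop) :
  dens (fun t => (P t \/ Q t) /\ C t) =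
  dens (fun t => P t /\ C t) + dens (fun t => Q t /\ C t) - dens (fun t => P t /\ Q t /\ C t).
Proof.
rewrite (dens_split (fun t => (P t \/ Q t) /\ C t) P) (dens_split (fun t => Q t /\ C t) P).
have -> : dens (fun t => P t /\ (P t \/ Q t) /\ C t) = dens (fun t => P t /\ C t).
  by apply: eq_dens => t; tauto.
have -> : dens (fun t => ~ P t /\ (P t \/ Q t) /\ C t) = dens (fun t => ~ P t /\ Q t /\ C t).
  by apply: eq_dens => t; tauto.
ring.
Qed.

End TupleDensity.

Lemma INR_expn m n : INR (m ^ n) = pow (INR m) n.
Proof. by elim: n => [|n IH]; rewrite ?expn0 // expnS mult_INR IH. Qed.

Lemma convergent_dens_atoms (G : nat -> fin_graph) (H : cnt_graph) (I : finType)
    (S : seq (bool * I * I)) :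
  elem_converges G H -> L_convergent G ->
  convergent (fun n => dens (fun t : {ffun I -> G n} => all (holds_atom t) S)).
Proof.
move=> ec lc.
have card_set n : #|[set t : {ffun I -> G n} | pb (all (holds_atom t) S)]| =
                  #|[set t : {ffun I -> G n} | all (holds_atom t) S]|.
  by apply: eq_card => t; rewrite !inE pb_bool.
case: (boolP (atoms_loop S)) => [loop|no_loop].
  apply: (convergent_ext _ (convergent_const R0)) => n.
  by rewrite /dens card_set card_atoms_loop // Rdiv_0_l.
pose K := quotient_graph S.
have := convergent_mult (lc K) (convergent_pow (#|I| - #|K|) (convergent_inv_order ec lc)).
apply: convergent_ext => n.
rewrite /dens card_set card_atoms_hom // -{1}(subnKC (card_quotient_graph S)) expnD.
by rewrite mult_INR !INR_expn /Rdiv Rinv_mult pow_inv /K; ring.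
Qed.

Definition sat_tuple (G : fin_graph) p (t : {ffun 'I_p.+1 -> G}) f :=
  sat (fun x y : G => fadj x y) (fun k => t (inord k)) f.

Lemma density_dens (G : fin_graph) p f : fv_below p.+1 f ->
  density p.+1 f G = dens (fun t : {ffun 'I_p.+1 -> G} => sat_tuple t f).
Proof.
move=> fvf; rewrite /density /dens card_ord; congr Rdiv; congr INR.
apply: eq_card => t; rewrite !inE; apply: pb_iff; split=> [[e [et he]]|ht].
  have /eq_sat e_t : forall k, free f k -> e k = t (inord k).
    by move=> k /fvf kp; rewrite -{1}(inordK kp) et.
  exact/e_t.
by exists (fun k => t (inord k)); split=> // i; rewrite inord_val.
Qed.

Definition atom_form p (a : bool * 'I_p.+1 * 'I_p.+1) : form :=
  if a.1.1 then FAdj a.1.2 a.2 else FEq a.1.2 a.2.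

Lemma sat_atom_form (G : fin_graph) p (t : {ffun 'I_p.+1 -> G}) a :
  sat_tuple t (atom_form a) <-> holds_atom t a.
Proof. by case: a => [[[] i] j]; rewrite /sat_tuple /holds_atom /= !inord_val //; split=> /eqP. Qed.

Definition conj_pred (G : fin_graph) p (L : seq form) (S : seq (bool * 'I_p.+1 * 'I_p.+1))
    (t : {ffun 'I_p.+1 -> G}) : Prop :=
  foldr (fun f P => sat_tuple t f /\ P) (all (holds_atom t) S) L.

Lemma conj_pred_cons_atom (G : fin_graph) p L a S (t : {ffun 'I_p.+1 -> G}) :
  conj_pred L (a :: S) t <-> sat_tuple t (atom_form a) /\ conj_pred L S t.
Proof.
elim: L => [|g L IH] /=; last by rewrite IH; tauto.
by rewrite sat_atom_form; split=> [/andP|[-> ->]].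
Qed.

Fixpoint form_size (f : form) : nat :=
  match f with
  | FNot g => (form_size g).+1
  | FAnd g h | FOr g h => (form_size g + form_size h).+1
  | _ => 1
  end.

Lemma qf_free_var f : qf f -> exists k, free f k.
Proof.
elim: f => [i j|i j|g IH|g IHg h _|g IHg h _|//|//] /=; try by exists i; rewrite eqxx.
  exact: IH.
all: by case/andP => /IHg [k gk] _; exists k; rewrite gk.
Qed.

Section QuantifierFreeLimit.
Variables (G : nat -> fin_graph) (p : nat).

Definition cvg_conj L S :=
  convergent (fun n => dens (fun t : {ffun 'I_p.+1 -> G n} => conj_pred L S t)).

Lemma cvg_conj_atom a L S : cvg_conj L (a :: S) -> cvg_conj (atom_form a :: L) S.
Proof.
by apply: convergent_ext => n; apply: eq_dens => t; rewrite conj_pred_cons_atom.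
Qed.

Lemma cvg_conj_not g L S : cvg_conj L S -> cvg_conj (g :: L) S -> cvg_conj (FNot g :: L) S.
Proof.
move=> cL cgL; apply: convergent_ext (convergent_minus cL cgL) => n.
exact: (dens_not (fun t => sat_tuple t g) (conj_pred L S)).
Qed.

Lemma cvg_conj_and g h L S : cvg_conj (g :: h :: L) S -> cvg_conj (FAnd g h :: L) S.
Proof.
by apply: convergent_ext => n; apply: eq_dens => t; rewrite /= /sat_tuple /=; tauto.
Qed.

Lemma cvg_conj_or g h L S :
  cvg_conj (g :: L) S -> cvg_conj (h :: L) S -> cvg_conj (g :: h :: L) S ->
  cvg_conj (FOr g h :: L) S.
Proof.
move=> cg ch cgh; apply: convergent_ext (convergent_minus (convergent_plus cg ch) cgh) => n.
exact: (dens_or (fun t => sat_tuple t g) (fun t => sat_tuple t h) (conj_pred L S)).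
Qed.

Lemma cvg_conj_qf (H : cnt_graph) L S :
  elem_converges G H -> L_convergent G ->
  List.Forall (fun f => qf f /\ fv_below p.+1 f) L -> cvg_conj L S.
Proof.
move=> ec lc; have [n] := ubnP (sumn (map form_size L)).
elim: n L S => // n IH [|g L] S /= size_lt; first by move=> _; exact: convergent_dens_atoms ec lc.
move/List.Forall_cons_iff => [[qg fvg] qfL].
have fv_sub g' : (forall k, free g' k -> free g k) -> fv_below p.+1 g'.
  by move=> sub k /sub /fvg.
case: g qg fvg fv_sub size_lt => [i j|i j|g|g h|g h|//|//] /= qg fvg fv_sub size_lt.
- have ip : (i < p.+1)%N by apply: fvg; rewrite /= eqxx.
  have jp : (j < p.+1)%N by apply: fvg; rewrite /= eqxx orbT.
  by apply: (@cvg_conj_atom (true, Ordinal ip, Ordinal jp)); apply: IH => //; lia.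
- have ip : (i < p.+1)%N by apply: fvg; rewrite /= eqxx.
  have jp : (j < p.+1)%N by apply: fvg; rewrite /= eqxx orbT.
  by apply: (@cvg_conj_atom (false, Ordinal ip, Ordinal jp)); apply: IH => //; lia.
- apply: cvg_conj_not; apply: IH => //; first lia.
  exact: List.Forall_cons _ (conj qg fvg) qfL.
- case/andP: qg => qg qh.
  have fv_g : fv_below p.+1 g by apply: fv_sub => k ->.
  have fv_h : fv_below p.+1 h by apply: fv_sub => k ->; rewrite orbT.
  apply: cvg_conj_and; apply: IH; first by rewrite /=; lia.
  exact: List.Forall_cons _ (conj qg fv_g) (List.Forall_cons _ (conj qh fv_h) qfL).
- case/andP: qg => qg qh.
  have fv_g : fv_below p.+1 g by apply: fv_sub => k ->.
  have fv_h : fv_below p.+1 h by apply: fv_sub => k ->; rewrite orbT.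
  have qf_hL := List.Forall_cons _ (conj qh fv_h) qfL.
  apply: cvg_conj_or; apply: IH; try by rewrite /=; lia.
  + exact: List.Forall_cons _ (conj qg fv_g) qfL.
  + exact: qf_hL.
  + exact: List.Forall_cons _ (conj qg fv_g) qf_hL.
Qed.

End QuantifierFreeLimit.

Lemma L_QF_convergent (G : nat -> fin_graph) (H : cnt_graph) :
  elem_converges G H -> L_convergent G -> QF_convergent G.
Proof.
move=> ec lc [|p] f qf_f fvf; first by have [k /fvf] := qf_free_var qf_f.
apply: (convergent_ext (fun n => density_dens (G n) fvf)).
have := cvg_conj_qf [::] ec lc (List.Forall_cons _ (conj qf_f fvf) (List.Forall_nil _)).
by apply: convergent_ext => n; apply: eq_dens => t /=; split=> [h|[h _]].
Qed.

Theorem lemma5p8 (G : nat -> fin_graph) (H : cnt_graph) :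
  elem_converges G H -> ultra_homogeneous H ->
  (FO_convergent G <-> QF_convergent G) /\ (QF_convergent G <-> L_convergent G).
Proof.
move=> ec uh; split; split.
- by move=> fo p f _; apply: fo.
- exact: QF_FO_convergent ec uh.
- exact: QF_L_convergent.
- exact: L_QF_convergent ec.
Qed.
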